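(* Let $F(s)=-\sum_{j=1}^\infty j\ln(1-e^{sj})$ for $s<0$. Then for every integer $m\ge0$, $$F^{(m)}(-s)\sim\zeta(3)\,\Gamma(m+2)\,\frac{1}{s^{m+2}},\quad\text{as } s\downarrow0.$$
   Context: $F$ is the fulcrum $s\mapsto\ln M(e^s)$ of the MacMahon function $M(z)=\prod_{j\ge1}(1-z^j)^{-j}$, the generating function of plane partitions. $F^{(m)}$ is the $m$-th derivative. $\alpha(s)\sim\beta(s)$ means $\alpha(s)/\beta(s)\to1$. $\zeta$ is the Riemann zeta function and $\Gamma$ the Gamma function. *)

From Stdlib Require Import Reals.
From Coquelicot Require Import Coquelicot.
Open Scope R_scope.

(* The fulcrum of the MacMahon function: F(s) = - sum_{j>=1} j ln(1 - e^{s j}),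
   meaningful for s < 0 (index n corresponds to j = n+1). *)
Definition F (s : R) : R :=
  - Series (fun n : nat => INR (S n) * ln (1 - exp (s * INR (S n)))).

Definition zeta3 : R := Series (fun n : nat => / (INR (S n)) ^ 3).

Definition Gamma (x : R) : R :=
  RInt_gen (fun t => Rpower t (x - 1) * exp (- t))
           (at_right 0) (Rbar_locally p_infty).

(* Expanding [- ln (1 - e^{x j})] turns [F] into the double series
   [sum_{j,k} (j / k) e^{x j k}], which can be differentiated termwise for [x < 0]:
   [F^(m)(x) = sum_{j,k} j^{m+1} k^{m-1} e^{x j k}].  Summing over [j] first gives
   [F^(m)(-s) = sum_k k^{m-1} T_{m+1}(s k)] with the power sums
   [T_p(t) = sum_j j^p e^{-t j}].  Summation by parts gives
   [(p+1) e^{-t} T_p <= (1 - e^{-t}) T_{p+1} <= (p+1) T_p], hence [t^{p+1} T_p(t) -> p!]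
   as [t -> 0+], with the uniform bound [t^{p+1} T_p(t) <= p! 2^{p+1}].  So
   [s^{m+2} F^(m)(-s) = sum_k k^{-3} (s k)^{m+2} T_{m+1}(s k) -> (m+1)! zeta(3)] by
   dominated convergence, and [Gamma(m+2) = (m+1)!]. *)

From Stdlib Require Import Reals Lra Lia Factorial.
From Coquelicot Require Import Coquelicot.
Open Scope R_scope.

Lemma filterlim_locally_Rabs {T} {F : (T -> Prop) -> Prop} {FF : Filter F}
  (f : T -> R) (l : R) :
  filterlim f F (locally l) <->
  forall eps, 0 < eps -> F (fun x => Rabs (f x - l) < eps).
Proof.
  rewrite filterlim_locally. split.
  - intros H eps Heps. exact (H (mkposreal eps Heps)).
  - intros H [eps Heps]. exact (H eps Heps).
Qed.

Lemma filterlim_Rmult {T} {F : (T -> Prop) -> Prop} {FF : Filter F}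
  (f g : T -> R) (a b : R) :
  filterlim f F (locally a) -> filterlim g F (locally b) ->
  filterlim (fun x => f x * g x) F (locally (a * b)).
Proof.
  intros Hf Hg. exact (filterlim_comp_2 f g Rmult Hf Hg (@filterlim_mult R_AbsRing a b)).
Qed.

Lemma filterlim_Rplus {T} {F : (T -> Prop) -> Prop} {FF : Filter F}
  (f g : T -> R) (a b : R) :
  filterlim f F (locally a) -> filterlim g F (locally b) ->
  filterlim (fun x => f x + g x) F (locally (a + b)).
Proof.
  intros Hf Hg.
  exact (filterlim_comp_2 f g Rplus Hf Hg (@filterlim_plus R_AbsRing R_NormedModule a b)).
Qed.

Lemma filterlim_sum_f_R0 {T} {F : (T -> Prop) -> Prop} {FF : Filter F}
  (u : nat -> T -> R) (L : nat -> R) (N : nat) :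
  (forall n, filterlim (u n) F (locally (L n))) ->
  filterlim (fun y => sum_f_R0 (fun k => u k y) N) F (locally (sum_f_R0 L N)).
Proof.
  intros H; induction N as [|N IH]; simpl; [apply H|apply filterlim_Rplus; auto].
Qed.

Lemma Rabs_le_of_filterlim {T} {F : (T -> Prop) -> Prop} {FF : ProperFilter F}
  (g : T -> R) (l B : R) :
  filterlim g F (locally l) -> F (fun y => Rabs (g y) <= B) -> Rabs l <= B.
Proof.
  intros Hl HB. apply Rle_plus_epsilon. intros eps Heps.
  apply filterlim_locally_Rabs with (eps := eps) in Hl; [|exact Heps].
  destruct (filter_ex _ (filter_and _ _ HB Hl)) as [y [H1 H2]].
  pose proof (Rabs_triang_inv l (g y)). rewrite Rabs_minus_sym in H2. lra.
Qed.

Lemma at_right_0_pos : at_right 0 (fun t => 0 < t).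
Proof. exists (mkposreal 1 Rlt_0_1). intros y _ Hy. exact Hy. Qed.

Lemma filterlim_at_right_ex_derive (f : R -> R) (x : R) :
  ex_derive f x -> filterlim f (at_right x) (locally (f x)).
Proof.
  intros Hd. apply (filterlim_filter_le_1 (F := locally x)); [apply filter_le_within|].
  apply (@ex_derive_continuous R_AbsRing R_NormedModule). exact Hd.
Qed.

Lemma filterlim_scal_at_right_0 (c : R) :
  0 < c -> filterlim (fun s => s * c) (at_right 0) (at_right 0).
Proof.
  intros Hc P [eps HP].
  assert (He : 0 < eps / c) by (apply Rdiv_lt_0_compat; [apply cond_pos|exact Hc]).
  exists (mkposreal _ He). intros y Hy Hy0. apply HP; [|nra].
  change (Rabs (y * c - 0) < eps). change (Rabs (y - 0) < eps / c) in Hy.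
  rewrite Rminus_0_r in *. rewrite Rabs_mult, (Rabs_pos_eq c) by lra.
  apply (Rmult_lt_compat_r c) in Hy; [|exact Hc].
  unfold Rdiv in Hy. rewrite Rmult_assoc, Rinv_l, Rmult_1_r in Hy by lra. exact Hy.
Qed.

Lemma ex_series_Rabs_le (a M : nat -> R) :
  (forall n, Rabs (a n) <= M n) -> ex_series M -> ex_series a.
Proof. intros. apply (@ex_series_le R_AbsRing R_CompleteNormedModule a M); auto. Qed.

Lemma Series_nonneg (a : nat -> R) :
  (forall n, 0 <= a n) -> ex_series a -> 0 <= Series a.
Proof.
  intros Ha Hex.
  replace 0 with (Series (fun n => 0 * a n)) by (rewrite Series_scal_l; ring).
  apply Series_le; [|exact Hex]. intros n. specialize (Ha n). lra.
Qed.

Lemma Series_Rabs_le (a M : nat -> R) :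
  (forall n, Rabs (a n) <= M n) -> ex_series M -> Rabs (Series a) <= Series M.
Proof.
  intros H HM. eapply Rle_trans; [apply Series_Rabs|].
  - apply (ex_series_Rabs_le _ M); [|exact HM]. intros n. rewrite Rabs_Rabsolu. apply H.
  - apply Series_le; [|exact HM]. intros n. split; [apply Rabs_pos|apply H].
Qed.

Lemma Series_split (a : nat -> R) (N : nat) :
  ex_series a -> Series a = sum_f_R0 a N + Series (fun k => a (S N + k)%nat).
Proof. intros Hex. rewrite (Series_incr_n a (S N)) by (lia || exact Hex). reflexivity. Qed.

Lemma sum_f_R0_le_Series (a : nat -> R) (N : nat) :
  (forall n, 0 <= a n) -> ex_series a -> sum_f_R0 a N <= Series a.
Proof.
  intros Ha Hex. rewrite (Series_split a N Hex).
  pose proof (Series_nonneg (fun k => a (S N + k)%nat) (fun k => Ha _)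
                (proj1 (ex_series_incr_n _ _) Hex)).
  lra.
Qed.

Lemma term_le_Series (a : nat -> R) (N : nat) :
  (forall n, 0 <= a n) -> ex_series a -> a N <= Series a.
Proof.
  intros Ha Hex. eapply Rle_trans; [|exact (sum_f_R0_le_Series a N Ha Hex)].
  destruct N; simpl; [lra|]. pose proof (cond_pos_sum a N Ha). lra.
Qed.

Lemma ex_series_bounded_sums (a : nat -> R) (B : R) :
  (forall n, 0 <= a n) -> (forall N, sum_f_R0 a N <= B) -> ex_series a.
Proof.
  intros Ha HB. apply ex_series_Reals_1. apply growing_cv.
  - intros n. simpl. specialize (Ha (S n)). lra.
  - exists B. intros x [n ->]. apply HB.
Qed.

Lemma Series_le_bounded_sums (a : nat -> R) (B : R) :
  ex_series a -> (forall N, sum_f_R0 a N <= B) -> Series a <= B.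
Proof.
  intros Hex HB. destruct (Rle_dec (Series a) B) as [|Hn]; [assumption|exfalso].
  destruct (proj1 (is_series_Reals a _) (Series_correct _ Hex) (Series a - B)) as [N HN];
    [lra|].
  specialize (HN N (le_n _)). specialize (HB N). unfold Rdist in HN.
  rewrite Rabs_minus_sym in HN. pose proof (Rle_abs (Series a - sum_f_R0 a N)). lra.
Qed.

Lemma Series_tail_lt (M : nat -> R) (eps : R) :
  ex_series M -> 0 < eps -> exists N, Rabs (Series (fun k => M (S N + k)%nat)) < eps.
Proof.
  intros HM Heps.
  destruct (proj1 (is_series_Reals M (Series M)) (Series_correct _ HM) eps Heps) as [N HN].
  exists N. specialize (HN N (le_n _)). unfold Rdist in HN.
  rewrite (Series_split M N HM) in HN.
  replace (sum_f_R0 M N - (sum_f_R0 M N + Series (fun k => M (S N + k)%nat)))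
    with (- Series (fun k => M (S N + k)%nat)) in HN by ring.
  rewrite Rabs_Ropp in HN. exact HN.
Qed.

Lemma Rabs_plus_minus_plus_le (a b c d : R) :
  Rabs ((a + b) - (c + d)) <= Rabs (a - c) + Rabs b + Rabs d.
Proof.
  replace ((a + b) - (c + d)) with ((a - c) + (b + - d)) by ring.
  pose proof (Rabs_triang (a - c) (b + - d)). pose proof (Rabs_triang b (- d)).
  rewrite Rabs_Ropp in *. lra.
Qed.

Lemma filterlim_Series_dominated {T} (F : (T -> Prop) -> Prop) {FF : ProperFilter F}
  (u : nat -> T -> R) (L M : nat -> R) :
  (forall n, filterlim (u n) F (locally (L n))) -> ex_series M ->
  F (fun y => forall n, Rabs (u n y) <= M n) ->
  filterlim (fun y => Series (fun n => u n y)) F (locally (Series L)).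
Proof.
  intros Hu HM Hdom.
  assert (HL : forall n, Rabs (L n) <= M n).
  { intros n. apply (Rabs_le_of_filterlim (u n)); [apply Hu|].
    generalize Hdom. apply filter_imp. auto. }
  apply filterlim_locally_Rabs. intros eps Heps.
  destruct (Series_tail_lt M (eps / 3) HM) as [N HN]; [lra|].
  assert (Htail : forall a, (forall n, Rabs (a n) <= M n) ->
            ex_series a /\ Rabs (Series (fun k => a (S N + k)%nat)) < eps / 3).
  { intros a Ha. split; [exact (ex_series_Rabs_le a M Ha HM)|].
    eapply Rle_lt_trans; [apply (Series_Rabs_le _ (fun k => M (S N + k)%nat))|].
    - intros k. apply Ha.
    - apply ex_series_incr_n. exact HM.
    - eapply Rle_lt_trans; [apply Rle_abs|exact HN]. }
  destruct (Htail L HL) as [HexL HtailL].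
  pose proof (proj1 (filterlim_locally_Rabs _ _) (filterlim_sum_f_R0 u L N Hu) (eps / 3))
    as Hfin.
  generalize (filter_and _ _ Hdom (Hfin ltac:(lra))). apply filter_imp.
  intros y [Hy Hsum]. destruct (Htail _ Hy) as [Hexu Htailu].
  rewrite (Series_split _ N Hexu), (Series_split L N HexL).
  eapply Rle_lt_trans; [apply Rabs_plus_minus_plus_le|]. lra.
Qed.

Lemma Rabs_difference_quotient_le (f f' : R -> R) (x h B : R) :
  h <> 0 ->
  (forall y, Rabs (y - x) <= Rabs h -> is_derive f y (f' y) /\ Rabs (f' y) <= B) ->
  Rabs ((f (x + h) - f x) / h) <= B.
Proof.
  intros Hh Hf.
  assert (Hin : forall z, Rmin x (x + h) <= z <= Rmax x (x + h) -> Rabs (z - x) <= Rabs h).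
  { intros z. unfold Rmin, Rmax. destruct (Rle_dec x (x + h)); intros Hz;
      unfold Rabs; destruct (Rcase_abs (z - x)); destruct (Rcase_abs h); lra. }
  destruct (MVT_gen f x (x + h) f') as [c [Hc Heq]].
  - intros z Hz. apply Hf, Hin. lra.
  - intros z Hz. apply continuity_pt_filterlim.
    apply (@ex_derive_continuous R_AbsRing R_NormedModule).
    exists (f' z). apply Hf, Hin, Hz.
  - rewrite Heq. replace (f' c * (x + h - x) / h) with (f' c) by (field; exact Hh).
    apply Hf, Hin, Hc.
Qed.

(* The difference quotients are dominated by [M], so Tannery's theorem applies. *)
Lemma is_derive_Series (f f' : nat -> R -> R) (M : nat -> R) (x r : R) :
  0 < r ->
  (forall n y, Rabs (y - x) < r -> is_derive (f n) y (f' n y)) ->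
  (forall n y, Rabs (y - x) < r -> Rabs (f' n y) <= M n) ->
  ex_series M ->
  (forall y, Rabs (y - x) < r -> ex_series (fun n => f n y)) ->
  is_derive (fun y => Series (fun n => f n y)) x (Series (fun n => f' n x)).
Proof.
  intros Hr Hd HB HM Hex.
  assert (Hx : Rabs (x - x) < r) by (rewrite Rminus_eq_0, Rabs_R0; exact Hr).
  set (q := fun n h => (f n (x + h) - f n x) / h).
  assert (Hq : filterlim (fun h => Series (fun n => q n h)) (Rbar_locally' 0)
                 (locally (Series (fun n => f' n x)))).
  { apply (filterlim_Series_dominated _ q _ M); [|exact HM|].
    - intros n. apply filterlim_locally_Rabs. intros eps Heps.
      destruct (proj1 (is_derive_Reals _ _ _) (Hd n x Hx) eps Heps) as [delta Hdelta].
      exists delta. intros h Hh Hh0. apply Hdelta; [exact Hh0|].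
      change (Rabs (h - 0) < delta) in Hh. rewrite Rminus_0_r in Hh. exact Hh.
    - exists (mkposreal r Hr). intros h Hh Hh0 n.
      change (Rabs (h - 0) < r) in Hh. rewrite Rminus_0_r in Hh.
      apply (Rabs_difference_quotient_le _ (f' n)); [exact Hh0|].
      intros y Hy. split; [apply Hd|apply HB]; lra. }
  apply is_derive_Reals. intros eps Heps.
  destruct (proj1 (filterlim_locally_Rabs _ _) Hq eps Heps) as [delta Hdelta].
  assert (Hdr : 0 < Rmin delta r) by (apply Rmin_pos; [apply cond_pos|exact Hr]).
  exists (mkposreal _ Hdr). intros h Hh0 Hh. simpl in Hh.
  assert (Hhr : Rabs (x + h - x) < r).
  { replace (x + h - x) with h by ring. eapply Rlt_le_trans; [exact Hh|apply Rmin_r]. }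
  replace ((Series (fun n => f n (x + h)) - Series (fun n => f n x)) / h)
    with (Series (fun n => q n h)).
  - apply Hdelta; [|exact Hh0]. change (Rabs (h - 0) < delta).
    rewrite Rminus_0_r. eapply Rlt_le_trans; [exact Hh|apply Rmin_l].
  - unfold q, Rdiv. rewrite Series_scal_r, Series_minus; auto.
Qed.

Lemma Series_sum_f_R0 (a : nat -> nat -> R) (N : nat) :
  (forall j, ex_series (a j)) ->
  ex_series (fun k => sum_f_R0 (fun j => a j k) N) /\
  Series (fun k => sum_f_R0 (fun j => a j k) N) = sum_f_R0 (fun j => Series (a j)) N.
Proof.
  intros H. induction N as [|N [IHex IHeq]]; simpl; [auto|split].
  - apply (ex_series_plus (V := R_NormedModule)); auto.
  - rewrite Series_plus, IHeq; auto.
Qed.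

Lemma Series_Series_le_swap (a : nat -> nat -> R) :
  (forall j k, 0 <= a j k) ->
  (forall k, ex_series (fun j => a j k)) ->
  ex_series (fun k => Series (fun j => a j k)) ->
  (forall j, ex_series (a j)) /\ ex_series (fun j => Series (a j)) /\
  Series (fun j => Series (a j)) <= Series (fun k => Series (fun j => a j k)).
Proof.
  intros Ha Hcol Hsum.
  assert (Hrow : forall j, ex_series (a j)).
  { intros j. apply (ex_series_Rabs_le _ (fun k => Series (fun j => a j k))); [|exact Hsum].
    intros k. rewrite Rabs_pos_eq by apply Ha.
    exact (term_le_Series (fun j => a j k) j (fun i => Ha i k) (Hcol k)). }
  assert (Hpart : forall N, sum_f_R0 (fun j => Series (a j)) N
                            <= Series (fun k => Series (fun j => a j k))).
  { intros N. destruct (Series_sum_f_R0 a N Hrow) as [_ <-].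
    apply Series_le; [|exact Hsum]. intros k. split.
    - apply cond_pos_sum. intros j. apply Ha.
    - apply (sum_f_R0_le_Series (fun j => a j k)); auto. }
  assert (Hex : ex_series (fun j => Series (a j))).
  { apply (ex_series_bounded_sums _ _ (fun j => Series_nonneg _ (Ha j) (Hrow j)) Hpart). }
  split; [exact Hrow|split; [exact Hex|]].
  apply Series_le_bounded_sums; assumption.
Qed.

Lemma Series_Series_swap (a : nat -> nat -> R) :
  (forall j k, 0 <= a j k) ->
  (forall k, ex_series (fun j => a j k)) ->
  ex_series (fun k => Series (fun j => a j k)) ->
  (forall j, ex_series (a j)) /\ ex_series (fun j => Series (a j)) /\
  Series (fun j => Series (a j)) = Series (fun k => Series (fun j => a j k)).
Proof.
  intros Ha Hcol Hsum.
  destruct (Series_Series_le_swap a Ha Hcol Hsum) as [Hrow [Hex Hle]].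
  destruct (Series_Series_le_swap (fun k j => a j k) (fun k j => Ha j k) Hrow Hex)
    as [_ [_ Hge]].
  split; [exact Hrow|split; [exact Hex|exact (Rle_antisym _ _ Hle Hge)]].
Qed.

Definition jR (n : nat) : R := INR (S n).

Lemma jR_pos (n : nat) : 0 < jR n.
Proof. apply lt_0_INR. lia. Qed.

Lemma jR_ge_1 (n : nat) : 1 <= jR n.
Proof. unfold jR. rewrite S_INR. pose proof (pos_INR n). lra. Qed.

Lemma jR_S (n : nat) : jR (S n) = jR n + 1.
Proof. apply S_INR. Qed.

Lemma exp_mul_jR (c : R) (n : nat) : exp (c * jR n) = exp c ^ S n.
Proof.
  induction n as [|n IH]; [unfold jR; simpl; rewrite !Rmult_1_r; reflexivity|].
  rewrite jR_S, Rmult_plus_distr_l, exp_plus, IH, Rmult_1_r. simpl. ring.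
Qed.

Lemma exp_opp_lt_1 (t : R) : 0 < t -> exp (- t) < 1.
Proof. intros Ht. rewrite <- exp_0. apply exp_increasing. lra. Qed.

Lemma pow_le_fact_mul_exp (x : R) (p : nat) : 0 <= x -> x ^ p <= INR (fact p) * exp x.
Proof.
  intros Hx.
  assert (Hf : 0 < INR (fact p)) by (apply lt_0_INR, lt_O_fact).
  assert (Hterm : x ^ p / INR (fact p) <= exp x).
  { eapply Rle_trans; [|exact (exp_ge_taylor x p Hx)].
    destruct p as [|p]; simpl; [lra|].
    assert (0 <= sum_f_R0 (fun k => x ^ k / INR (fact k)) p); [|lra].
    apply cond_pos_sum. intros k. apply Rmult_le_pos; [apply pow_le; exact Hx|].
    apply Rlt_le, Rinv_0_lt_compat, lt_0_INR, lt_O_fact. }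
  apply (Rmult_le_compat_l (INR (fact p))) in Hterm; [|lra].
  replace (INR (fact p) * (x ^ p / INR (fact p))) with (x ^ p) in Hterm by (field; lra).
  exact Hterm.
Qed.

Lemma Series_geom_S (C q : R) :
  0 <= q < 1 ->
  ex_series (fun n => C * q ^ S n) /\ Series (fun n => C * q ^ S n) = C * (q / (1 - q)).
Proof.
  intros Hq.
  assert (Hq' : Rabs q < 1) by (rewrite Rabs_pos_eq; lra).
  assert (Hext : forall n, C * q * q ^ n = C * q ^ S n) by (intros; simpl; ring).
  split.
  - eapply ex_series_ext; [exact Hext|].
    apply (ex_series_scal_l (V := R_NormedModule)). apply ex_series_geom. exact Hq'.
  - rewrite <- (Series_ext _ _ Hext), Series_scal_l, Series_geom by exact Hq'.
    unfold Rdiv. ring.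
Qed.

Lemma exp_opp_div_one_minus_le (u : R) : 0 < u -> exp (- u) / (1 - exp (- u)) <= / u.
Proof.
  intros Hu. pose proof (exp_opp_lt_1 u Hu). pose proof (exp_ineq1_le u).
  assert (He : exp (- u) * exp u = 1) by (rewrite <- exp_plus, Rplus_opp_l; apply exp_0).
  assert (0 < exp (- u)) by apply exp_pos.
  apply (Rmult_le_reg_r (u * (1 - exp (- u)))); [apply Rmult_lt_0_compat; lra|].
  unfold Rdiv. field_simplify; [|lra|lra]. nra.
Qed.

Definition pow_exp_sum (p : nat) (t : R) : R := Series (fun n => jR n ^ p * exp (- t) ^ S n).

(* With [y = t j / 2]: [j^p e^{-tj} = (2/t)^p y^p e^{-y} e^{-y}] and [y^p e^{-y} <= p!]. *)
Lemma pow_exp_sum_term_le (p : nat) (t : R) (n : nat) :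
  0 < t -> jR n ^ p * exp (- t) ^ S n <= INR (fact p) * (2 / t) ^ p * exp (- (t / 2)) ^ S n.
Proof.
  intros Ht. rewrite <- !exp_mul_jR.
  set (y := t / 2 * jR n).
  assert (Hy : 0 <= y) by (unfold y; pose proof (jR_pos n); apply Rmult_le_pos; lra).
  replace (jR n ^ p) with ((2 / t) ^ p * y ^ p)
    by (unfold y; rewrite <- Rpow_mult_distr; f_equal; field; lra).
  replace (exp (- t * jR n)) with (exp (- y) * exp (- y))
    by (rewrite <- exp_plus; f_equal; unfold y; field).
  replace (- (t / 2) * jR n) with (- y) by (unfold y; field).
  assert (Hpe : y ^ p * exp (- y) <= INR (fact p)).
  { pose proof (pow_le_fact_mul_exp y p Hy) as H.
    apply (Rmult_le_compat_r (exp (- y))) in H; [|apply Rlt_le, exp_pos].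
    rewrite Rmult_assoc, <- exp_plus, Rplus_opp_r, exp_0, Rmult_1_r in H. exact H. }
  assert (0 <= (2 / t) ^ p) by (apply pow_le, Rlt_le, Rdiv_lt_0_compat; lra).
  pose proof (exp_pos (- y)).
  replace ((2 / t) ^ p * y ^ p * (exp (- y) * exp (- y)))
    with ((2 / t) ^ p * exp (- y) * (y ^ p * exp (- y))) by ring.
  replace (INR (fact p) * (2 / t) ^ p * exp (- y))
    with ((2 / t) ^ p * exp (- y) * INR (fact p)) by ring.
  apply Rmult_le_compat_l; [apply Rmult_le_pos; lra|exact Hpe].
Qed.

Lemma pow_exp_sum_term_nonneg (p : nat) (t : R) (n : nat) : 0 <= jR n ^ p * exp (- t) ^ S n.
Proof.
  apply Rmult_le_pos; apply pow_le; [apply Rlt_le, jR_pos|apply Rlt_le, exp_pos].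
Qed.

Lemma ex_series_pow_exp (p : nat) (t : R) :
  0 < t -> ex_series (fun n => jR n ^ p * exp (- t) ^ S n).
Proof.
  intros Ht. pose proof (exp_pos (- (t / 2))). pose proof (exp_opp_lt_1 (t / 2)).
  apply (ex_series_Rabs_le _ (fun n => INR (fact p) * (2 / t) ^ p * exp (- (t / 2)) ^ S n)).
  - intros n. rewrite Rabs_pos_eq by apply pow_exp_sum_term_nonneg.
    apply pow_exp_sum_term_le. exact Ht.
  - apply Series_geom_S. lra.
Qed.

Lemma pow_exp_sum_nonneg (p : nat) (t : R) : 0 < t -> 0 <= pow_exp_sum p t.
Proof.
  intros Ht. apply Series_nonneg; [apply pow_exp_sum_term_nonneg|apply ex_series_pow_exp, Ht].
Qed.

Lemma pow_exp_sum_le (p : nat) (t : R) :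
  0 < t -> pow_exp_sum p t <= INR (fact p) * (2 / t) ^ S p.
Proof.
  intros Ht. set (q := exp (- (t / 2))).
  assert (Hq : 0 <= q < 1).
  { unfold q. split; [apply Rlt_le, exp_pos|apply exp_opp_lt_1; lra]. }
  destruct (Series_geom_S (INR (fact p) * (2 / t) ^ p) q Hq) as [Hex Hsum].
  eapply Rle_trans; [apply Series_le; [|exact Hex]|].
  - intros n. split; [apply pow_exp_sum_term_nonneg|apply pow_exp_sum_term_le, Ht].
  - rewrite Hsum. simpl pow. rewrite (Rmult_comm (2 / t)), <- Rmult_assoc.
    apply Rmult_le_compat_l.
    + apply Rmult_le_pos; [apply pos_INR|apply pow_le, Rlt_le, Rdiv_lt_0_compat; lra].
    + unfold q. replace (2 / t) with (/ (t / 2)) by (field; lra).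
      apply exp_opp_div_one_minus_le. lra.
Qed.

Lemma one_minus_mul_Series_pow (c : nat -> R) (q : R) :
  ex_series (fun n => c n * q ^ S n) ->
  (1 - q) * Series (fun n => c n * q ^ S n)
  = c 0%nat * q + Series (fun k => (c (S k) - c k) * q ^ S (S k)).
Proof.
  intros Hex. set (b := fun n => c n * q ^ S n) in *.
  assert (HexS : ex_series (fun k => b (S k))) by exact (proj1 (ex_series_incr_1 b) Hex).
  assert (Hexq : ex_series (fun k => q * b k))
    by (apply (ex_series_scal_l (V := R_NormedModule)); exact Hex).
  rewrite Rmult_minus_distr_r, Rmult_1_l, <- Series_scal_l, (Series_incr_1 b Hex).
  transitivity (b 0%nat + (Series (fun k => b (S k)) - Series (fun k => q * b k))); [ring|].
  f_equal; [unfold b; simpl; ring|].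
  rewrite <- Series_minus by assumption. apply Series_ext. intros k. unfold b. simpl. ring.
Qed.

Lemma pow_succ_sub_pow_bounds (p : nat) (b : R) :
  0 <= b -> INR (S p) * b ^ p <= (b + 1) ^ S p - b ^ S p <= INR (S p) * (b + 1) ^ p.
Proof.
  intros Hb. induction p as [|p [IHlo IHhi]]; [simpl; lra|].
  replace ((b + 1) ^ S (S p) - b ^ S (S p))
    with ((b + 1) * ((b + 1) ^ S p - b ^ S p) + b ^ S p) by (simpl; ring).
  rewrite (S_INR (S p)).
  assert (b ^ S p <= (b + 1) ^ S p) by (apply pow_incr; lra).
  assert (0 <= b ^ p) by (apply pow_le; lra).
  pose proof (pos_INR (S p)).
  change ((b + 1) ^ S p) with ((b + 1) * (b + 1) ^ p) in *.
  change (b ^ S p) with (b * b ^ p) in *.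
  split; nra.
Qed.

Lemma pow_succ_sub_pow_mul_bounds (p k : nat) (q : R) :
  0 <= q ->
  0 <= INR (S p) * (jR k ^ p * q ^ S (S k)) <= (jR (S k) ^ S p - jR k ^ S p) * q ^ S (S k)
  /\ (jR (S k) ^ S p - jR k ^ S p) * q ^ S (S k) <= INR (S p) * (jR (S k) ^ p * q ^ S (S k)).
Proof.
  intros Hq. rewrite jR_S.
  destruct (pow_succ_sub_pow_bounds p (jR k) (Rlt_le _ _ (jR_pos k))) as [Hlo Hhi].
  assert (Hr : 0 <= q ^ S (S k)) by (apply pow_le, Hq).
  assert (0 <= INR (S p) * jR k ^ p)
    by (apply Rmult_le_pos; [apply pos_INR|apply pow_le, Rlt_le, jR_pos]).
  rewrite <- !Rmult_assoc.
  split; [split|]; [apply Rmult_le_pos|apply Rmult_le_compat_r|apply Rmult_le_compat_r];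
    assumption.
Qed.

(* Summation by parts: [(1 - q) T_{p+1}] is a sum of [((j+1)^{p+1} - j^{p+1}) q^{j+1}],
   which is squeezed between [(p+1) j^p] and [(p+1) (j+1)^p] times [q^{j+1}]. *)
Lemma pow_exp_sum_succ_bounds (p : nat) (t : R) :
  0 < t ->
  INR (S p) * exp (- t) * pow_exp_sum p t <= (1 - exp (- t)) * pow_exp_sum (S p) t
  <= INR (S p) * pow_exp_sum p t.
Proof.
  intros Ht. pose proof (ex_series_pow_exp p t Ht) as Hexp.
  unfold pow_exp_sum. rewrite (one_minus_mul_Series_pow (fun n => jR n ^ S p))
    by apply ex_series_pow_exp, Ht.
  set (q := exp (- t)) in *.
  assert (Hq0 : 0 < q) by apply exp_pos.
  set (d := fun k => (jR (S k) ^ S p - jR k ^ S p) * q ^ S (S k)).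
  set (lo := fun k => INR (S p) * (jR k ^ p * q ^ S (S k))).
  set (hi := fun k => INR (S p) * (jR (S k) ^ p * q ^ S (S k))).
  assert (Hd : forall k, 0 <= lo k <= d k /\ d k <= hi k)
    by (intros k; apply pow_succ_sub_pow_mul_bounds; lra).
  assert (Hexhi : ex_series hi).
  { apply (ex_series_scal_l (V := R_NormedModule)).
    exact (proj1 (ex_series_incr_1 _) Hexp). }
  assert (Hexd : ex_series d).
  { apply (ex_series_Rabs_le _ hi); [|exact Hexhi].
    intros k. destruct (Hd k) as [[Hlo Hld] Hdh]. rewrite Rabs_pos_eq; lra. }
  replace (jR 0 ^ S p) with 1 by (unfold jR; simpl; rewrite pow1; ring).
  split.
  - apply Rle_trans with (Series d); [|pose proof (pow_le q 1 (Rlt_le _ _ Hq0)); lra].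
    rewrite Rmult_assoc, <- !Series_scal_l. apply Series_le; [|exact Hexd].
    intros k. replace (INR (S p) * (q * (jR k ^ p * q ^ S k))) with (lo k)
      by (unfold lo; simpl; ring).
    apply Hd.
  - rewrite (Series_incr_1 _ Hexp), Rmult_plus_distr_l, <- Series_scal_l.
    replace (jR 0 ^ p) with 1 by (unfold jR; simpl; rewrite pow1; ring).
    apply Rplus_le_compat.
    + pose proof (pos_INR p). rewrite S_INR. simpl. nra.
    + apply Series_le; [|exact Hexhi]. intros k.
      destruct (Hd k) as [[Hlo Hld] Hdh]. split; [lra|exact Hdh].
Qed.

Lemma filterlim_exp_opp_at_right_0 : filterlim (fun t => exp (- t)) (at_right 0) (locally 1).
Proof.
  pose proof (filterlim_at_right_ex_derive (fun t => exp (- t)) 0) as H.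
  cbv beta in H. rewrite Ropp_0, exp_0 in H. apply H. auto_derive. exact I.
Qed.

Lemma filterlim_div_one_minus_exp_opp :
  filterlim (fun t => t / (1 - exp (- t))) (at_right 0) (locally 1).
Proof.
  apply (filterlim_le_le (fun _ => 1) _ exp (Finite 1)).
  - generalize at_right_0_pos. apply filter_imp. intros t Ht.
    pose proof (exp_opp_lt_1 t Ht). pose proof (exp_ineq1_le (- t)).
    pose proof (exp_ineq1_le t). pose proof (exp_pos t).
    assert (He : exp t * exp (- t) = 1) by (rewrite <- exp_plus, Rplus_opp_r; apply exp_0).
    split; apply (Rmult_le_reg_r (1 - exp (- t))); try lra;
      unfold Rdiv; rewrite Rmult_assoc, Rinv_l, Rmult_1_r by lra; nra.
  - apply filterlim_const.
  - pose proof (filterlim_at_right_ex_derive exp 0) as H.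
    rewrite exp_0 in H. apply H. auto_derive. exact I.
Qed.

Definition scaled_pow_exp_sum (p : nat) (t : R) : R := t ^ S p * pow_exp_sum p t.

Lemma filterlim_scaled_pow_exp_sum (p : nat) :
  filterlim (scaled_pow_exp_sum p) (at_right 0) (locally (INR (fact p))).
Proof.
  set (A := fun t => t / (1 - exp (- t))).
  pose proof filterlim_div_one_minus_exp_opp as HA. fold A in HA.
  assert (HA0 : at_right 0 (fun t => 0 < t /\ 0 < exp (- t) < 1 /\ 0 <= A t)).
  { generalize at_right_0_pos. apply filter_imp. intros t Ht.
    pose proof (exp_opp_lt_1 t Ht). pose proof (exp_pos (- t)).
    split; [exact Ht|split; [lra|]]. apply Rlt_le, Rdiv_lt_0_compat; lra. }
  induction p as [|p IH].
  - apply (filterlim_ext_loc (fun t => A t * exp (- t))).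
    + generalize HA0. apply filter_imp. intros t [Ht [Hq _]].
      destruct (Series_geom_S 1 (exp (- t))) as [_ Hgeom]; [lra|].
      unfold scaled_pow_exp_sum, pow_exp_sum, A.
      rewrite (Series_ext _ (fun n => 1 * exp (- t) ^ S n)) by (intros; simpl; ring).
      rewrite Hgeom. simpl. field. lra.
    + replace (INR (fact 0)) with (1 * 1) by (simpl; ring).
      apply filterlim_Rmult; [exact HA|exact filterlim_exp_opp_at_right_0].
  - replace (INR (fact (S p))) with (1 * (INR (S p) * 1 * INR (fact p)))
      by (rewrite fact_simpl, mult_INR; ring).
    apply (filterlim_le_le (fun t => A t * (INR (S p) * exp (- t) * scaled_pow_exp_sum p t))
             _ (fun t => A t * (INR (S p) * 1 * scaled_pow_exp_sum p t))
             (Finite (1 * (INR (S p) * 1 * INR (fact p))))).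
    + generalize HA0. apply filter_imp. intros t [Ht [Hq HAt]].
      destruct (pow_exp_sum_succ_bounds p t Ht) as [Hlo Hhi].
      assert (Ht' : 0 <= t ^ S p) by (apply pow_le; lra).
      replace (scaled_pow_exp_sum (S p) t)
        with (A t * (t ^ S p * ((1 - exp (- t)) * pow_exp_sum (S p) t)))
        by (unfold scaled_pow_exp_sum, A; simpl; field; lra).
      unfold scaled_pow_exp_sum.
      split; apply Rmult_le_compat_l; try exact HAt; nra.
    + apply filterlim_Rmult; [exact HA|]. apply filterlim_Rmult; [|exact IH].
      apply filterlim_Rmult; [apply filterlim_const|exact filterlim_exp_opp_at_right_0].
    + apply filterlim_Rmult; [exact HA|]. apply filterlim_Rmult; [|exact IH].
      apply filterlim_const.
Qed.

Lemma is_derive_log_series (z0 : R) :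
  -1 < z0 < 1 -> is_derive (fun z => Series (fun k => z ^ S k / jR k)) z0 (/ (1 - z0)).
Proof.
  intros Hz0.
  set (rho := (1 + Rabs z0) / 2).
  assert (Ha : Rabs z0 < 1) by (apply Rabs_def1; lra).
  assert (Hrho : 0 <= rho < 1) by (unfold rho; pose proof (Rabs_pos z0); lra).
  assert (Hball : forall z, Rabs (z - z0) < (1 - Rabs z0) / 2 -> Rabs z <= rho).
  { intros z Hz. pose proof (Rabs_triang_inv z z0). unfold rho. lra. }
  rewrite <- Series_geom by exact Ha.
  apply (is_derive_Series (fun k z => z ^ S k / jR k) (fun k z => z ^ k) (fun k => rho ^ k)
           z0 ((1 - Rabs z0) / 2)).
  - lra.
  - intros k y _. pose proof (jR_pos k). auto_derive; [lra|].
    change (match k with 0%nat => 1 | S _ => INR k + 1 end) with (INR (S k)).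
    fold (jR k). field. lra.
  - intros k y Hy. rewrite <- RPow_abs. apply pow_incr.
    split; [apply Rabs_pos|exact (Hball y Hy)].
  - apply ex_series_geom. rewrite Rabs_pos_eq; lra.
  - intros y Hy. apply (ex_series_Rabs_le _ (fun k => rho ^ k)).
    + intros k. pose proof (Hball y Hy). pose proof (jR_ge_1 k).
      unfold Rdiv. rewrite Rabs_mult, <- RPow_abs, Rabs_inv, (Rabs_pos_eq (jR k)) by lra.
      assert (Hyk : Rabs y ^ S k <= rho ^ k).
      { simpl. pose proof (pow_le (Rabs y) k (Rabs_pos y)). pose proof (Rabs_pos y).
        assert (Rabs y ^ k <= rho ^ k) by (apply pow_incr; split; [apply Rabs_pos|lra]).
        nra. }
      assert (0 < / jR k <= 1).
      { split; [apply Rinv_0_lt_compat; lra|].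
        rewrite <- Rinv_1. apply Rinv_le_contravar; lra. }
      pose proof (pow_le (Rabs y) (S k) (Rabs_pos y)). nra.
    + apply ex_series_geom. rewrite Rabs_pos_eq; lra.
Qed.

Lemma opp_ln_one_minus_Series (z : R) :
  -1 < z < 1 -> - ln (1 - z) = Series (fun k => z ^ S k / jR k).
Proof.
  intros Hz.
  set (phi := fun z => - ln (1 - z) - Series (fun k => z ^ S k / jR k)).
  assert (Hd : forall y, -1 < y < 1 -> is_derive phi y 0).
  { intros y Hy. unfold phi. replace 0 with (/ (1 - y) - / (1 - y)) by ring.
    apply (is_derive_minus (fun z => - ln (1 - z))); [|apply is_derive_log_series, Hy].
    auto_derive; [lra|]. field. lra. }
  assert (Hin : forall x, Rmin 0 z <= x <= Rmax 0 z -> -1 < x < 1).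
  { intros x. unfold Rmin, Rmax. destruct (Rle_dec 0 z); lra. }
  destruct (MVT_gen phi 0 z (fun _ => 0)) as [c [_ Hc]].
  - intros x Hx. apply Hd, Hin. lra.
  - intros x Hx. apply continuity_pt_filterlim.
    apply (@ex_derive_continuous R_AbsRing R_NormedModule).
    exists 0. apply Hd, Hin, Hx.
  - assert (Hphi0 : phi 0 = 0).
    { unfold phi. rewrite Rminus_0_r, ln_1.
      rewrite (Series_ext _ (fun k => 0 * / jR k)) by (intros; simpl; unfold Rdiv; ring).
      rewrite Series_scal_l. ring. }
    rewrite Hphi0 in Hc. unfold phi in Hc. lra.
Qed.

Lemma ex_series_inv_cube : ex_series (fun k => / jR k ^ 3).
Proof.
  assert (Htele : ex_series (fun k => 2 * (/ jR k - / jR (S k)))).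
  { apply (ex_series_bounded_sums _ 2).
    - intros n. rewrite jR_S. pose proof (jR_pos n).
      assert (/ (jR n + 1) <= / jR n) by (apply Rinv_le_contravar; lra). lra.
    - intros N. assert (Hsum : sum_f_R0 (fun k => 2 * (/ jR k - / jR (S k))) N
                               = 2 * (1 - / jR (S N))).
      { induction N as [|N IH]; simpl; [unfold jR; simpl; field|rewrite IH; ring]. }
      rewrite Hsum. pose proof (Rinv_0_lt_compat _ (jR_pos (S N))). lra. }
  apply (ex_series_Rabs_le _ (fun k => 2 * (/ jR k - / jR (S k)))); [intros k|exact Htele].
  pose proof (jR_ge_1 k). rewrite jR_S. set (a := jR k) in *.
  rewrite Rabs_pos_eq by (apply Rlt_le, Rinv_0_lt_compat; simpl; nra).
  replace (2 * (/ a - / (a + 1))) with (/ (a * (a + 1) / 2)) by (field; lra).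
  apply Rinv_le_contravar; [apply Rdiv_lt_0_compat|simpl]; nra.
Qed.

Lemma one_le_zeta3 : 1 <= zeta3.
Proof.
  change (1 <= Series (fun n => / jR n ^ 3)).
  eapply Rle_trans; [|apply (term_le_Series _ 0)].
  - unfold jR; simpl. lra.
  - intros n. apply Rlt_le, Rinv_0_lt_compat, pow_lt, jR_pos.
  - exact ex_series_inv_cube.
Qed.

Lemma scaled_pow_exp_sum_bounds (p : nat) (t : R) :
  0 < t -> 0 <= scaled_pow_exp_sum p t <= INR (fact p) * 2 ^ S p.
Proof.
  intros Ht. unfold scaled_pow_exp_sum.
  assert (Htp : 0 < t ^ S p) by (apply pow_lt, Ht).
  split; [apply Rmult_le_pos; [lra|apply pow_exp_sum_nonneg, Ht]|].
  replace (INR (fact p) * 2 ^ S p) with (t ^ S p * (INR (fact p) * (2 / t) ^ S p))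
    by (unfold Rdiv; rewrite Rpow_mult_distr, pow_inv; field; lra).
  apply Rmult_le_compat_l; [lra|apply pow_exp_sum_le, Ht].
Qed.

Definition F_deriv_term (m : nat) (x : R) (j k : nat) : R :=
  jR j ^ S m * jR k ^ m / jR k * exp (x * (jR j * jR k)).

Definition F_deriv_series (m : nat) (x : R) : R :=
  Series (fun j => Series (fun k => F_deriv_term m x j k)).

Lemma F_deriv_term_nonneg (m : nat) (x : R) (j k : nat) : 0 <= F_deriv_term m x j k.
Proof.
  unfold F_deriv_term. pose proof (jR_pos j). pose proof (jR_pos k).
  apply Rmult_le_pos; [|apply Rlt_le, exp_pos].
  apply Rlt_le, Rdiv_lt_0_compat; [apply Rmult_lt_0_compat; apply pow_lt|]; assumption.
Qed.

Lemma F_deriv_term_le (m : nat) (x y : R) (j k : nat) :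
  x <= y -> F_deriv_term m x j k <= F_deriv_term m y j k.
Proof.
  intros Hxy. unfold F_deriv_term. pose proof (jR_pos j). pose proof (jR_pos k).
  apply Rmult_le_compat_l.
  - apply Rlt_le, Rdiv_lt_0_compat; [apply Rmult_lt_0_compat; apply pow_lt|]; assumption.
  - destruct (Rle_lt_or_eq_dec _ _ Hxy) as [Hlt|<-]; [|right; reflexivity].
    apply Rlt_le, exp_increasing, Rmult_lt_compat_r; [nra|exact Hlt].
Qed.

Lemma is_derive_F_deriv_term (m : nat) (j k : nat) (x : R) :
  is_derive (fun x => F_deriv_term m x j k) x (F_deriv_term (S m) x j k).
Proof.
  unfold F_deriv_term. pose proof (jR_pos k). auto_derive; [exact I|]. simpl. field. lra.
Qed.

Lemma Series_F_deriv_term_col (m : nat) (t : R) (k : nat) :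
  0 < t ->
  ex_series (fun j => F_deriv_term m (- t) j k) /\
  Series (fun j => F_deriv_term m (- t) j k)
  = / t ^ S (S m) * (/ jR k ^ 3 * scaled_pow_exp_sum (S m) (t * jR k)).
Proof.
  intros Ht. pose proof (jR_pos k).
  assert (Hterm : forall j, F_deriv_term m (- t) j k
     = jR k ^ m / jR k * (jR j ^ S m * exp (- (t * jR k)) ^ S j)).
  { intros j. unfold F_deriv_term. rewrite <- exp_mul_jR.
    replace (- t * (jR j * jR k)) with (- (t * jR k) * jR j) by ring. field. lra. }
  split.
  - eapply ex_series_ext; [intros j; symmetry; apply Hterm|].
    apply (ex_series_scal_l (V := R_NormedModule)). apply ex_series_pow_exp. nra.
  - rewrite (Series_ext _ _ Hterm), Series_scal_l.
    unfold scaled_pow_exp_sum, pow_exp_sum. rewrite Rpow_mult_distr.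
    assert (0 < jR k ^ m) by (apply pow_lt; lra).
    assert (0 < t ^ m) by (apply pow_lt; lra).
    simpl. field. repeat split; lra.
Qed.

Lemma F_deriv_series_opp (m : nat) (t : R) :
  0 < t ->
  (forall j, ex_series (fun k => F_deriv_term m (- t) j k)) /\
  ex_series (fun j => Series (fun k => F_deriv_term m (- t) j k)) /\
  t ^ S (S m) * F_deriv_series m (- t)
  = Series (fun k => / jR k ^ 3 * scaled_pow_exp_sum (S m) (t * jR k)).
Proof.
  intros Ht. set (C := INR (fact (S m)) * 2 ^ S (S m)).
  assert (Htm : 0 < t ^ S (S m)) by (apply pow_lt, Ht).
  assert (Hcol : forall k, ex_series (fun j => F_deriv_term m (- t) j k))
    by (intros k; apply Series_F_deriv_term_col, Ht).
  assert (Hsum : ex_series (fun k => Series (fun j => F_deriv_term m (- t) j k))).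
  { apply (ex_series_Rabs_le _ (fun k => / t ^ S (S m) * (/ jR k ^ 3 * C))).
    - intros k. rewrite (proj2 (Series_F_deriv_term_col m t k Ht)).
      pose proof (jR_pos k). assert (0 < / jR k ^ 3) by (apply Rinv_0_lt_compat, pow_lt; lra).
      assert (0 < / t ^ S (S m)) by (apply Rinv_0_lt_compat; lra).
      destruct (scaled_pow_exp_sum_bounds (S m) (t * jR k)) as [Hlo Hhi]; [nra|].
      rewrite Rabs_pos_eq by (apply Rmult_le_pos; [|apply Rmult_le_pos]; lra).
      apply Rmult_le_compat_l; [lra|]. apply Rmult_le_compat_l; [lra|exact Hhi].
    - apply (ex_series_scal_l (V := R_NormedModule)), ex_series_scal_r.
      exact ex_series_inv_cube. }
  destruct (Series_Series_swap (fun j k => F_deriv_term m (- t) j k)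
              (fun j k => F_deriv_term_nonneg _ _ _ _) Hcol Hsum) as [Hrow [Hex Hswap]].
  split; [exact Hrow|split; [exact Hex|]].
  unfold F_deriv_series. rewrite Hswap, <- Series_scal_l. apply Series_ext. intros k.
  rewrite (proj2 (Series_F_deriv_term_col m t k Ht)), <- Rmult_assoc, Rinv_r, Rmult_1_l by lra.
  reflexivity.
Qed.

Lemma ex_series_F_deriv_rows (m : nat) (x : R) :
  x < 0 ->
  (forall j, ex_series (fun k => F_deriv_term m x j k)) /\
  ex_series (fun j => Series (fun k => F_deriv_term m x j k)).
Proof.
  intros Hx. destruct (F_deriv_series_opp m (- x)) as [Hrow [Hex _]]; [lra|].
  rewrite Ropp_involutive in Hrow, Hex. split; assumption.
Qed.

(* On [|y - x| < -x/2] every term is dominated by its value at the point [x/2 < 0]. *)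
Lemma is_derive_F_deriv_row (m j : nat) (x : R) :
  x < 0 ->
  is_derive (fun y => Series (fun k => F_deriv_term m y j k)) x
    (Series (fun k => F_deriv_term (S m) x j k)).
Proof.
  intros Hx.
  apply (is_derive_Series (fun k y => F_deriv_term m y j k) (fun k y => F_deriv_term (S m) y j k)
           (fun k => F_deriv_term (S m) (x / 2) j k) x (- x / 2)).
  - lra.
  - intros k y _. apply is_derive_F_deriv_term.
  - intros k y Hy. apply Rabs_lt_between' in Hy.
    rewrite Rabs_pos_eq by apply F_deriv_term_nonneg. apply F_deriv_term_le. lra.
  - apply ex_series_F_deriv_rows. lra.
  - intros y Hy. apply Rabs_lt_between' in Hy. apply ex_series_F_deriv_rows. lra.
Qed.

Lemma is_derive_F_deriv_series (m : nat) (x : R) :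
  x < 0 -> is_derive (F_deriv_series m) x (F_deriv_series (S m) x).
Proof.
  intros Hx.
  apply (is_derive_Series (fun j y => Series (fun k => F_deriv_term m y j k))
           (fun j y => Series (fun k => F_deriv_term (S m) y j k))
           (fun j => Series (fun k => F_deriv_term (S m) (x / 2) j k)) x (- x / 2)).
  - lra.
  - intros j y Hy. apply Rabs_lt_between' in Hy. apply is_derive_F_deriv_row. lra.
  - intros j y Hy. apply Rabs_lt_between' in Hy.
    assert (Hrow : forall z, z < 0 -> ex_series (fun k => F_deriv_term (S m) z j k))
      by (intros z Hz; apply ex_series_F_deriv_rows, Hz).
    rewrite Rabs_pos_eq
      by (apply Series_nonneg; [intros; apply F_deriv_term_nonneg|apply Hrow; lra]).
    apply Series_le; [|apply Hrow; lra].
    intros k. split; [apply F_deriv_term_nonneg|apply F_deriv_term_le; lra].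
  - apply ex_series_F_deriv_rows. lra.
  - intros y Hy. apply Rabs_lt_between' in Hy. apply ex_series_F_deriv_rows. lra.
Qed.

Lemma F_eq_F_deriv_series (x : R) : x < 0 -> F x = F_deriv_series 0 x.
Proof.
  intros Hx. unfold F, F_deriv_series.
  rewrite <- (Rmult_1_l (Series _)), Ropp_mult_distr_l, <- Series_scal_l.
  apply Series_ext. intros j. fold (jR j).
  assert (Hq : -1 < exp (x * jR j) < 1).
  { pose proof (exp_pos (x * jR j)). pose proof (jR_pos j).
    split; [lra|]. rewrite <- exp_0. apply exp_increasing. nra. }
  replace (- (1) * (jR j * ln (1 - exp (x * jR j))))
    with (jR j * - ln (1 - exp (x * jR j))) by ring.
  rewrite opp_ln_one_minus_Series, <- Series_scal_l by exact Hq.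
  apply Series_ext. intros k. unfold F_deriv_term.
  rewrite <- exp_mul_jR. pose proof (jR_pos k).
  replace (x * jR j * jR k) with (x * (jR j * jR k)) by ring. simpl. field. lra.
Qed.

Lemma Derive_n_F (m : nat) (x : R) : x < 0 -> Derive_n F m x = F_deriv_series m x.
Proof.
  revert x. induction m as [|m IH]; intros x Hx; [apply F_eq_F_deriv_series, Hx|].
  simpl. rewrite (Derive_ext_loc _ (F_deriv_series m)).
  - apply is_derive_unique, is_derive_F_deriv_series, Hx.
  - assert (Hr : 0 < - x) by lra. exists (mkposreal _ Hr). intros y Hy.
    change (Rabs (y - x) < - x) in Hy. apply Rabs_lt_between' in Hy. apply IH. lra.
Qed.

Lemma filterlim_scaled_F_deriv_series (m : nat) :
  filterlim (fun s => s ^ S (S m) * F_deriv_series m (- s)) (at_right 0)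
    (locally (zeta3 * INR (fact (S m)))).
Proof.
  set (u := fun k s => / jR k ^ 3 * scaled_pow_exp_sum (S m) (s * jR k)).
  apply (filterlim_ext_loc (fun s => Series (fun k => u k s))).
  { generalize at_right_0_pos. apply filter_imp. intros s Hs.
    symmetry. apply (F_deriv_series_opp m s Hs). }
  unfold zeta3. rewrite <- Series_scal_r.
  apply (filterlim_Series_dominated _ u _ (fun k => / jR k ^ 3 * (INR (fact (S m)) * 2 ^ S (S m)))).
  - intros k. apply filterlim_Rmult; [apply filterlim_const|].
    eapply filterlim_comp;
      [apply filterlim_scal_at_right_0, jR_pos|apply filterlim_scaled_pow_exp_sum].
  - apply ex_series_scal_r, ex_series_inv_cube.
  - generalize at_right_0_pos. apply filter_imp. intros s Hs k.
    pose proof (jR_pos k).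
    destruct (scaled_pow_exp_sum_bounds (S m) (s * jR k)) as [Hlo Hhi]; [nra|].
    assert (0 < / jR k ^ 3) by (apply Rinv_0_lt_compat, pow_lt; lra).
    unfold u. rewrite Rabs_pos_eq by (apply Rmult_le_pos; lra).
    apply Rmult_le_compat_l; lra.
Qed.

Fixpoint gamma_primitive (n : nat) (t : R) : R :=
  match n with
  | O => - exp (- t)
  | S n' => - t ^ S n' * exp (- t) + INR (S n') * gamma_primitive n' t
  end.

Lemma is_derive_gamma_primitive (n : nat) (t : R) :
  is_derive (gamma_primitive n) t (t ^ n * exp (- t)).
Proof.
  induction n as [|n IH]; simpl gamma_primitive; [auto_derive; [exact I|ring]|].
  apply (is_derive_ext (fun t => plus (- t ^ S n * exp (- t)) (INR (S n) * gamma_primitive n t)));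
    [reflexivity|].
  replace (t ^ S n * exp (- t)) with
    (plus (- (INR (S n) * t ^ n) * exp (- t) + t ^ S n * exp (- t))
          (INR (S n) * (t ^ n * exp (- t)))) by (unfold plus; simpl; ring).
  apply (@is_derive_plus R_AbsRing R_NormedModule); [|apply is_derive_scal, IH].
  auto_derive; [exact I|]. simpl. ring.
Qed.

Lemma gamma_primitive_0 (n : nat) : gamma_primitive n 0 = - INR (fact n).
Proof.
  induction n as [|n IH]; simpl gamma_primitive.
  - rewrite Ropp_0, exp_0. simpl. ring.
  - rewrite IH, fact_simpl, mult_INR. simpl. ring.
Qed.

Lemma filterlim_pow_mul_exp_opp_infty (n : nat) :
  filterlim (fun t => t ^ n * exp (- t)) (Rbar_locally p_infty) (locally 0).
Proof.
  apply filterlim_locally_Rabs. intros eps Heps.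
  set (C := INR (fact (S n))).
  assert (HC : 0 < C) by apply lt_0_INR, lt_O_fact.
  exists (Rmax 1 (C / eps)). intros t Ht.
  assert (Ht1 : 1 < t) by (eapply Rle_lt_trans; [apply Rmax_l|exact Ht]).
  assert (Ht2 : C / eps < t) by (eapply Rle_lt_trans; [apply Rmax_r|exact Ht]).
  assert (He : exp t * exp (- t) = 1) by (rewrite <- exp_plus, Rplus_opp_r; apply exp_0).
  assert (Hp : 0 <= t ^ n) by (apply pow_le; lra).
  assert (Hq : 0 < exp (- t)) by apply exp_pos.
  assert (Hbound : t * (t ^ n * exp (- t)) <= C).
  { pose proof (pow_le_fact_mul_exp t (S n) ltac:(lra)) as H.
    apply (Rmult_le_compat_r (exp (- t))) in H; [|lra].
    rewrite Rmult_assoc, He in H. change (t ^ S n) with (t * t ^ n) in H. fold C in H. lra. }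
  rewrite Rminus_0_r, Rabs_pos_eq by (apply Rmult_le_pos; lra).
  apply (Rmult_lt_reg_l t); [lra|].
  apply (Rmult_lt_compat_r eps) in Ht2; [|exact Heps].
  unfold Rdiv in Ht2. rewrite Rmult_assoc, Rinv_l, Rmult_1_r in Ht2 by lra. lra.
Qed.

Lemma filterlim_gamma_primitive_infty (n : nat) :
  filterlim (gamma_primitive n) (Rbar_locally p_infty) (locally 0).
Proof.
  induction n as [|n IH]; simpl gamma_primitive.
  - replace 0 with (- (1) * 0) by ring.
    apply (filterlim_ext (fun t => - (1) * (t ^ 0 * exp (- t)))); [intros; simpl; ring|].
    apply filterlim_Rmult; [apply filterlim_const|apply filterlim_pow_mul_exp_opp_infty].
  - replace 0 with (- (1) * 0 + INR (S n) * 0) by ring.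
    apply (filterlim_ext (fun t => - (1) * (t ^ S n * exp (- t)) + INR (S n) * gamma_primitive n t));
      [intros; simpl; ring|].
    apply filterlim_Rplus; apply filterlim_Rmult;
      [apply filterlim_const|apply filterlim_pow_mul_exp_opp_infty|apply filterlim_const|exact IH].
Qed.

Lemma Gamma_INR_succ (n : nat) : Gamma (INR n + 1) = INR (fact n).
Proof.
  unfold Gamma. apply is_RInt_gen_unique.
  assert (HD : forall t, Derive (gamma_primitive n) t = t ^ n * exp (- t))
    by (intros; apply is_derive_unique, is_derive_gamma_primitive).
  apply (is_RInt_gen_ext (Derive (gamma_primitive n))).
  - exists (fun a => 0 < a) (fun b => 0 < b); [exact at_right_0_pos|exists 0; auto|].
    intros a b Ha Hb x Hx. simpl in Hx. rewrite HD.
    replace (INR n + 1 - 1) with (INR n) by ring.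
    rewrite Rpower_pow; [reflexivity|].
    assert (0 < Rmin a b) by (apply Rmin_glb_lt; assumption). lra.
  - replace (INR (fact n)) with (0 - - INR (fact n)) by ring.
    apply is_RInt_gen_Derive.
    + apply filter_forall. intros ab x _. exists (x ^ n * exp (- x)).
      apply is_derive_gamma_primitive.
    + apply filter_forall. intros ab x _.
      apply (continuous_ext (fun t => t ^ n * exp (- t))); [intros; rewrite HD; reflexivity|].
      apply (@ex_derive_continuous R_AbsRing R_NormedModule). auto_derive. exact I.
    + rewrite <- gamma_primitive_0. apply filterlim_at_right_ex_derive.
      exists (0 ^ n * exp (- 0)). apply is_derive_gamma_primitive.
    + apply filterlim_gamma_primitive_infty.
Qed.

Theorem proposition4p3 (m : nat) :
  filterlim
    (fun s : R => Derive_n F m (- s) / (zeta3 * Gamma (INR m + 2) / s ^ (m + 2)))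
    (at_right 0) (locally 1).
Proof.
  replace (INR m + 2) with (INR (S m) + 1) by (rewrite S_INR; ring).
  rewrite Gamma_INR_succ.
  pose proof one_le_zeta3. pose proof (lt_0_INR _ (lt_O_fact (S m))).
  apply (filterlim_ext_loc
           (fun s => s ^ S (S m) * F_deriv_series m (- s) * / (zeta3 * INR (fact (S m))))).
  - generalize at_right_0_pos. apply filter_imp. intros s Hs.
    rewrite Derive_n_F by lra. replace (m + 2)%nat with (S (S m)) by lia.
    field. repeat split; try lra. apply pow_nonzero. lra.
  - replace 1 with (zeta3 * INR (fact (S m)) * / (zeta3 * INR (fact (S m)))) by (field; lra).
    apply filterlim_Rmult; [apply filterlim_scaled_F_deriv_series|apply filterlim_const].
Qed.
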